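(* Let $k\ge2$, let $\mathcal{F}$ be a saturated foliation of normal degree $d$ on $\mathbb{P}^2_k=\mathbb{P}(1,1,k)$, let $\pi:\mathbb{F}_k\to\mathbb{P}^2_k$ be the minimal resolution of $p_2=[0:0:1]$ with exceptional divisor $E$, let $r$ be the algebraic multiplicity of $\mathcal{F}$ at $p_2$ and $\mathcal{G}=\pi^*\mathcal{F}$. Then $\mathcal{G}$ is a Riccati foliation with respect to the natural rational fibration and $E$ is $\mathcal{G}$-invariant if and only if $r=d-k$. In particular, when these equivalent conditions hold, $\mathcal{F}$ has an invariant line.
   Context: $\mathbb{P}(1,1,k)$ is the quotient of $\mathbb{C}^3\setminus\{0\}$ by $t\cdot(x_0,x_1,x_2)=(tx_0,tx_1,t^kx_2)$. A foliation of normal degree $d$ is the class of a nonzero 1-form $\omega=\sum A_idx_i$ with $A_0,A_1$ quasi-homogeneous (weights $1,1,k$) of degree $d-1$, $A_2$ of degree $d-k$, $x_0A_0+x_1A_1+kx_2A_2=0$; saturated means finitely many zeros. Lines are curves $\{ax_0+bx_1=0\}$; a curve $\{P=0\}$ is invariant if $\omega\wedge dP=P\Theta$ for a polynomial 2-form $\Theta$. $E=\pi^{-1}(p_2)$, $E^2=-k$; the natural rational fibration of $\mathbb{F}_k$ has as fibres the strict transforms of lines through $p_2$. Algebraic multiplicity $r$: writing $\eta=\omega|_{x_2=1}=\sum_s\eta_s$ in coordinates $(x,y)=(x_0,x_1)$ with $\eta_s=a_sdx+b_sdy$, $a_s,b_s$ homogeneous of degree $s-1$, $r=\min\{s:\eta_s\ne0\}$.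 Riccati: transverse to the general fibre. *)

From HB Require Import structures.
From mathcomp Require Import all_boot all_order all_algebra.
From mathcomp Require Import mpoly.
Set Implicit Arguments. Unset Strict Implicit. Unset Printing Implicit Defensive.
Import Order.TTheory GRing.Theory Num.Theory.
Local Open Scope ring_scope.

(* Variables of C[x0,x1,x2] (homogeneous coordinates of P(1,1,k)). *)
Definition v0 : 'I_3 := @Ordinal 3 0 isT.
Definition v1 : 'I_3 := @Ordinal 3 1 isT.
Definition v2 : 'I_3 := @Ordinal 3 2 isT.
Definition u0 : 'I_2 := @Ordinal 2 0 isT.
Definition u1 : 'I_2 := @Ordinal 2 1 isT.

Definition pt3 {C : ringType} (a b c : C) : 'I_3 -> C :=
  fun i => nth 0 [:: a; b; c] i.
Definition pt2 {C : ringType} (a b : C) : 'I_2 -> C :=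
  fun i => nth 0 [:: a; b] i.

Definition wdeg (k : nat) (m : 'X_{1..3}) : nat := (m v0 + m v1 + k * m v2)%N.

(* p is quasi-homogeneous of weighted degree D (D may be negative: then p = 0) *)
Definition qhomog {C : ringType} (k : nat) (D : int) (p : {mpoly C[3]}) : Prop :=
  forall m, m \in msupp p -> (wdeg k m)%:Z = D.

(* omega = A0 dx0 + A1 dx1 + A2 dx2 defines a foliation of normal degree d
   on P(1,1,k) *)
Definition is_foliation {C : ringType} (k d : nat) (A0 A1 A2 : {mpoly C[3]}) : Prop :=
  [/\ qhomog k (d%:Z - 1) A0, qhomog k (d%:Z - 1) A1, qhomog k (d%:Z - k%:Z) A2,
      'X_v0 * A0 + 'X_v1 * A1 + k%:R *: ('X_v2 * A2) = 0
    & ~ (A0 = 0 /\ A1 = 0 /\ A2 = 0)].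

Definition wact {C : ringType} (k : nat) (t : C) (s : C * C * C) : 'I_3 -> C :=
  pt3 (t * s.1.1) (t * s.1.2) (t ^+ k * s.2).

(* saturated: omega has finitely many zeros on P(1,1,k), i.e. its zero set in
   C^3 \ {0} is a finite union of C^*-orbits *)
Definition saturated {C : ringType} (k : nat) (A0 A1 A2 : {mpoly C[3]}) : Prop :=
  exists S : seq (C * C * C), forall x : 'I_3 -> C,
    (exists i, x i != 0) ->
    A0.@[x] = 0 -> A1.@[x] = 0 -> A2.@[x] = 0 ->
    exists2 s, s \in S & exists2 t : C, t != 0 & x =1 wact k t s.

Definition dehom {C : comRingType} (p : {mpoly C[3]}) : {mpoly C[2]} :=
  p \mPo [tuple 'X_u0; 'X_u1; 1].

(* eta_s <> 0, where eta = omega|_{x2=1} = a dx + b dy and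
   eta_s = a_s dx + b_s dy with a_s, b_s homogeneous of degree s-1 *)
Definition eta_nz {C : comRingType} (A0 A1 : {mpoly C[3]}) (s : nat) : Prop :=
  exists m : 'X_{1..2}, mdeg m = s.-1 /\
    ((dehom A0)@_m != 0 \/ (dehom A1)@_m != 0).

(* r is the algebraic multiplicity at p2 = [0:0:1] : r = min {s : eta_s <> 0} *)
Definition alg_mult {C : comRingType} (A0 A1 : {mpoly C[3]}) (r : nat) : Prop :=
  [/\ (1 <= r)%N, eta_nz A0 A1 r
    & forall s, (1 <= s < r)%N -> ~ eta_nz A0 A1 s].

(* Over the fibres t = x1/x0 in C, F_k is covered by
     U1 : (t, v),  (t,v) |-> [1 : t : v]            (pi is an isomorphism there)
     U3 : (t, w),  (t,w) |-> [1 : t : 1/w] (w<>0),  (t,0) |-> p2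
   with w = 1/v = x0^k/x2, E = {w = 0}; the fibres of the natural rational
   fibration are {t = const}.
   On U1, G is given by  A1(1,t,v) dt + A2(1,t,v) dv.
   On U3, G is given by the saturated form P dt + Q dw, where
   P dt + Q dw = w^m (A1(1,t,1/w) dt - w^-2 A2(1,t,1/w) dw) for some m : int,
   with P, Q polynomials not both divisible by w. (variables: u0 = t, u1 = w)
   --------------------------------------------------------------------------- *)
Definition U3_form {C : fieldType} (A1 A2 : {mpoly C[3]}) (P Q : {mpoly C[2]}) : Prop :=
  (exists m : int, forall t w : C, w != 0 ->
      P.@[pt2 t w] = w ^ m * A1.@[pt3 1 t w^-1] /\
      Q.@[pt2 t w] = - (w ^ (m - 2) * A2.@[pt3 1 t w^-1]))
  /\ ~ (exists R S : {mpoly C[2]}, P = 'X_u1 * R /\ Q = 'X_u1 * S).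

(* G is transverse to the fibre {t = c} at every point of it:
   at (c,v) in U1 (fibre direction d/dv) and at the point (c,0) of E in U3
   (fibre direction d/dw). *)
Definition fibre_transverse {C : fieldType} (A2 : {mpoly C[3]}) (Q : {mpoly C[2]})
  (c : C) : Prop :=
  (forall v : C, A2.@[pt3 1 c v] != 0) /\ Q.@[pt2 c 0] != 0.

(* Riccati: transverse to the general fibre *)
Definition riccati {C : fieldType} (A2 : {mpoly C[3]}) (Q : {mpoly C[2]}) : Prop :=
  exists S : seq C, forall c, c \notin S -> fibre_transverse A2 Q c.

(* E = {w = 0} is G-invariant:  (P dt + Q dw) /\ dw = w Theta *)
Definition E_invariant {C : fieldType} (P : {mpoly C[2]}) : Prop :=
  exists Theta : {mpoly C[2]}, P = 'X_u1 * Theta.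

Definition G_riccati_and_E_invariant {C : fieldType} (A1 A2 : {mpoly C[3]}) : Prop :=
  exists P Q : {mpoly C[2]}, [/\ U3_form A1 A2 P Q, riccati A2 Q & E_invariant P].

(* invariant curve {F = 0}: omega /\ dF = F Theta, Theta a polynomial 2-form;
   the dx_i/\dx_j coefficient of omega /\ dF is A_i dF/dx_j - A_j dF/dx_i *)
Definition invariant_curve {C : ringType} (A0 A1 A2 F : {mpoly C[3]}) : Prop :=
  let A := fun i : 'I_3 => nth 0 [:: A0; A1; A2] i in
  forall i j : 'I_3, exists Theta : {mpoly C[3]},
    A i * F^`M(j) - A j * F^`M(i) = F * Theta.

Definition has_invariant_line {C : ringType} (A0 A1 A2 : {mpoly C[3]}) : Prop :=
  exists a b : C, (a != 0 \/ b != 0) /\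
    invariant_curve A0 A1 A2 (a *: 'X_v0 + b *: 'X_v1).

(* Quasi-homogeneity ties every monomial x0^a x1^b x2^c of A0 or A1 to
   a + b + k c = d - 1, so the algebraic multiplicity at p2 is r = d - k c with c
   the largest x2-degree occurring in A0, A1.  Hence r = d - k says exactly that
   A0 and A1 are affine, but not constant, in x2, and then the Euler relation
   x0 A0 + x1 A1 + k x2 A2 = 0 makes A2 a binary form alpha(x0, x1).
   In the chart (t, w) around E, the pull-back is
   w^m (A1(1,t,1/w) dt - w^-2 A2(1,t,1/w) dw); it is polynomial, tangent to E and
   transverse to the general fibre {t = c} exactly when m = 2, A1(1,t,v) has
   degree at most one in v and A2(1,t,v) is a nonzero function of t alone
   (saturation excludes A2 = 0).
   Finally alpha has degree d - k = r >= 1, so it has a linear factor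
   L = a x0 + b x1; restricting the Euler relation to {L = 0}, where (x0, x1) is
   proportional to (b, -a), shows that L divides b A0 - a A1, and together with
   L | A2 this is the invariance of the line {L = 0}. *)

From HB Require Import structures.
From mathcomp Require Import all_boot all_order all_algebra.
From mathcomp Require Import mpoly.
From mathcomp Require Import zify ring.
Import Order.TTheory GRing.Theory Num.Theory.
Local Open Scope ring_scope.
Set Implicit Arguments. Unset Strict Implicit.

Section PolyCofinite.
Variable R : numDomainType.
Implicit Types (p : {poly R}) (S : seq R).

Lemma poly_nonroot_notin p S : p != 0 -> exists2 t, t \notin S & p.[t] != 0.
Proof.
move=> p0; pose q := p * \prod_(z <- S) ('X - z%:P).
(* In characteristic zero, 0, 1, 2, ... are infinitely many distinct points. *)
have q0 : q != 0 by rewrite mulf_neq0 // monic_neq0 // monic_prod_XsubC.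
have /allPn [t _] : ~~ all (root q) [seq i%:R | i <- iota 0 (size q)].
  apply: contra q0 => /roots_geq_poly_eq0 -> //; last by rewrite size_map size_iota.
  by rewrite map_inj_uniq ?iota_uniq // => i j /eqP; rewrite eqr_nat => /eqP.
rewrite /root hornerM mulf_eq0 negb_or => /andP[pt St]; exists t => //.
apply: contra St => tS; rewrite horner_prod (big_rem t tS) /= hornerXsubC subrr.
by rewrite mul0r.
Qed.

Lemma poly_eq0_cofinite p S : (forall x, x \notin S -> p.[x] = 0) -> p = 0.
Proof.
move=> pS; apply/eqP; apply: contraT => p0.
by have [t /pS ->] := poly_nonroot_notin S p0; rewrite eqxx.
Qed.

End PolyCofinite.

Section LaurentMonomials.
Variable R : numFieldType.
Implicit Types (p q : {poly R}).

Lemma expz_eq0_of_horner q (e : int) (a : R) : a != 0 -> q.[0] != 0 ->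
  (forall w, w != 0 -> q.[w] = w ^ e * a) -> e = 0.
Proof.
move=> a0 q0 qw; case: e qw => [[|n]|n] qw //; exfalso.
- have : q = a *: 'X^(n.+1).
    apply/subr0_eq/(poly_eq0_cofinite (S := [:: 0])) => w; rewrite inE => w0.
    by rewrite hornerD hornerN hornerZ hornerXn qw // mulrC subrr.
  by move=> qE; move: q0; rewrite qE hornerZ hornerXn expr0n mulr0 eqxx.
- have : 'X^(n.+1) * q = a%:P.
    apply/subr0_eq/(poly_eq0_cofinite (S := [:: 0])) => w; rewrite inE => w0.
    rewrite hornerD hornerN hornerM hornerXn hornerC qw // NegzE -exprnN.
    by rewrite mulrA mulfV ?expf_neq0 // mul1r subrr.
  move=> /(congr1 (horner^~ 0)); rewrite /= hornerM hornerXn hornerC expr0n mul0r.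
  by move/esym/eqP; rewrite (negbTE a0).
Qed.

Lemma size_le_of_horner_inv p q (j : nat) :
  (forall w, w != 0 -> q.[w] = w ^+ j * p.[w^-1]) -> (size p <= j.+1)%N.
Proof.
move=> qw; rewrite leqNgt; apply/negP => jp.
have [n sp] : exists n, size p = n.+1.
  by exists (size p).-1; rewrite prednK // (leq_ltn_trans _ jp).
have jn : (j < n)%N by rewrite -ltnS -sp.
(* The reversal w^n p(1/w) of p, whose value at 0 is the leading coefficient. *)
pose rp := \sum_(i < n.+1) p`_i *: 'X^(n - i).
have : 'X^(n - j) * q = rp.
  apply/subr0_eq/(poly_eq0_cofinite (S := [:: 0])) => w; rewrite inE => w0.
  rewrite hornerD hornerN hornerM hornerXn qw // (horner_coef_wide _ (eq_leq sp)).
  rewrite /rp horner_sum !mulr_sumr -sumrB big1 // => i _.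
  have wn : w ^+ (n - j) * w ^+ j = w ^+ (n - i) * w ^+ i.
    by rewrite -!exprD !subnK // ?(ltnW jn) // -ltnS.
  rewrite hornerZ hornerXn exprVn !mulrA wn; field.
  exact: expf_neq0.
move=> /(congr1 (horner^~ 0)).
rewrite /= hornerM hornerXn expr0n subn_eq0 leqNgt jn mul0r.
rewrite /rp horner_sum big_ord_recr /= big1 => [|i _]; last first.
  by rewrite hornerZ hornerXn expr0n subn_eq0 leqNgt ltn_ord mulr0.
rewrite add0r hornerZ hornerXn subnn expr0 mulr1 => /esym/eqP.
by rewrite -[n]/(n.+1.-1) -sp -lead_coefE lead_coef_eq0 -size_poly_eq0 sp.
Qed.

End LaurentMonomials.

Lemma poly_nonroot_cofinite (F : closedFieldType) (p : {poly F}) :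
  p != 0 -> exists S : seq F, forall c, c \notin S -> p.[c] != 0.
Proof.
move=> p0; have [rs ->] := closed_field_poly_normal p; exists rs => c cS.
rewrite hornerZ horner_prod mulf_neq0 ?lead_coef_eq0 // prodf_seq_neq0.
by apply/allP => z zr /=; rewrite hornerXsubC subr_eq0; apply: contraNneq cS => ->.
Qed.

Lemma ord3P (i : 'I_3) : [\/ i = v0, i = v1 | i = v2].
Proof.
by case: i => [[|[|[|//]]] ?]; [constructor 1 | constructor 2 | constructor 3];
  apply: val_inj.
Qed.

Lemma prod_ord3 (R : comNzRingType) (F : 'I_3 -> R) :
  \prod_(i < 3) F i = F v0 * F v1 * F v2.
Proof.
rewrite !big_ord_recl big_ord0 mulr1 mulrA.
by congr (F _ * F _ * F _); apply: val_inj.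
Qed.

Lemma prod_ord2 (R : comNzRingType) (F : 'I_2 -> R) :
  \prod_(i < 2) F i = F u0 * F u1.
Proof.
by rewrite !big_ord_recl big_ord0 mulr1; congr (F _ * F _); apply: val_inj.
Qed.

Lemma meval_pt3 (R : comNzRingType) (A : {mpoly R[3]}) a b c :
  A.@[pt3 a b c] = \sum_(m <- msupp A) A@_m * (a ^+ m v0 * b ^+ m v1 * c ^+ m v2).
Proof. by rewrite mevalE; apply: eq_bigr => m _; rewrite prod_ord3. Qed.

Lemma meval_pt2 (R : comNzRingType) (Q : {mpoly R[2]}) a b :
  Q.@[pt2 a b] = \sum_(m <- msupp Q) Q@_m * (a ^+ m u0 * b ^+ m u1).
Proof. by rewrite mevalE; apply: eq_bigr => m _; rewrite prod_ord2. Qed.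

Section MonomialSupport.
Variables (R : nzRingType) (n : nat).
Implicit Types (p : {mpoly R[n]}).

Lemma msupp_neq0 p : p != 0 -> exists m, m \in msupp p.
Proof.
by rewrite -msupp_eq0; case: (msupp p) => [|m s] // _; exists m; rewrite mem_head.
Qed.

Lemma mcoeff_XM_neq0 p i m :
  ('X_i * p)@_m != 0 -> exists2 m', m' \in msupp p & m = (U_(i) + m')%MM.
Proof. by rewrite -mcoeff_msupp -commr_mpolyX (perm_mem (msuppMX _ _)) => /mapP. Qed.

Lemma mpolyXU_neq0 (i : 'I_n) : ('X_i : {mpoly R[n]}) != 0.
Proof.
apply/eqP => /(congr1 (mcoeff U_(i))); rewrite mcoeffX eqxx mcoeff0.
exact/eqP/oner_neq0.
Qed.

End MonomialSupport.

Lemma mcoeff_XM_neq0_x2 (R : nzRingType) (p : {mpoly R[3]}) i n :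
  ('X_i * p)@_n != 0 -> exists2 m, m \in msupp p & n v2 = ((i == v2) + m v2)%N.
Proof. by move=> /mcoeff_XM_neq0[m pm ->]; exists m; rewrite // mnmDE mnm1E. Qed.

Section QuasiHomogeneous.
Variables (R : nzRingType) (k : nat) (D : int) (A : {mpoly R[3]}).
Hypothesis qhA : qhomog k D A.

Lemma qhomog_supp_eq12 m m' : m \in msupp A -> m' \in msupp A ->
  m v1 = m' v1 -> m v2 = m' v2 -> m = m'.
Proof.
move=> /qhA + /qhA; rewrite /wdeg => <- [] e e1 e2.
by apply/mnmP => i; case: (ord3P i) => ->; lia.
Qed.

Lemma qhomog_supp_eq01 m m' : (0 < k)%N -> m \in msupp A -> m' \in msupp A ->
  m v0 = m' v0 -> m v1 = m' v1 -> m = m'.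
Proof.
move=> k0 /qhA + /qhA; rewrite /wdeg => <- [] e e0 e1.
by apply/mnmP => i; case: (ord3P i) => ->; nia.
Qed.

End QuasiHomogeneous.

Section X2Slices.
Variable R : comNzRingType.
Implicit Types (A : {mpoly R[3]}) (Q : {mpoly R[2]}).

Definition x2deg_le A (j : nat) := forall m, m \in msupp A -> (m v2 <= j)%N.

Definition x2coef A (j : nat) : {poly R} :=
  \sum_(m <- msupp A | m v2 == j) A@_m *: 'X^(m v1).

Definition fibreU1 A (c : R) : {poly R} :=
  \sum_(m <- msupp A) (A@_m * c ^+ m v1) *: 'X^(m v2).

Definition fibreU3 Q (c : R) : {poly R} :=
  \sum_(m <- msupp Q) (Q@_m * c ^+ m u0) *: 'X^(m u1).

(* The truncated [j - m v2] is meaningful only under [x2deg_le A j]. *)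
Definition x2rev A (j : nat) : {mpoly R[2]} :=
  \sum_(m <- msupp A) A@_m *: ('X_u0 ^+ m v1 * 'X_u1 ^+ (j - m v2)).

Lemma horner_x2coef A j t :
  (x2coef A j).[t] = \sum_(m <- msupp A | m v2 == j) A@_m * t ^+ m v1.
Proof. by rewrite horner_sum; apply: eq_bigr => m _; rewrite hornerZ hornerXn. Qed.

Lemma coef_fibreU1 A c j : (fibreU1 A c)`_j = (x2coef A j).[c].
Proof.
rewrite coef_sum horner_x2coef [RHS]big_mkcond; apply: eq_bigr => m _.
by rewrite coefZ coefXn eq_sym; case: eqP; rewrite ?mulr1 ?mulr0.
Qed.

Lemma horner_fibreU1 A c v : (fibreU1 A c).[v] = A.@[pt3 1 c v].
Proof.
rewrite meval_pt3 horner_sum; apply: eq_bigr => m _.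
by rewrite hornerZ hornerXn expr1n mul1r mulrA.
Qed.

Lemma horner_fibreU3 Q c w : (fibreU3 Q c).[w] = Q.@[pt2 c w].
Proof.
rewrite meval_pt2 horner_sum; apply: eq_bigr => m _.
by rewrite hornerZ hornerXn mulrA.
Qed.

Lemma x2coef_gt A j i : x2deg_le A j -> (j < i)%N -> x2coef A i = 0.
Proof.
move=> Aj ji; rewrite /x2coef big1_seq // => m /andP[/eqP mi /Aj].
by rewrite mi leqNgt ji.
Qed.

Lemma size_fibreU1 A j c : x2deg_le A j -> (size (fibreU1 A c) <= j.+1)%N.
Proof.
by move=> Aj; apply/leq_sizeP => i ji; rewrite coef_fibreU1 (x2coef_gt Aj) ?horner0.
Qed.

Lemma meval_x2deg0 A t v : x2deg_le A 0 -> A.@[pt3 1 t v] = (x2coef A 0).[t].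
Proof.
move=> A0; rewrite -horner_fibreU1 [fibreU1 _ _]size1_polyC ?size_fibreU1 //.
by rewrite hornerC coef_fibreU1.
Qed.

Lemma meval_x2deg1 A t v : x2deg_le A 1 ->
  A.@[pt3 1 t v] = (x2coef A 0).[t] + v * (x2coef A 1).[t].
Proof.
move=> A1; rewrite -horner_fibreU1 (horner_coef_wide _ (size_fibreU1 _ A1)).
by rewrite !big_ord_recl big_ord0 /= !coef_fibreU1 expr0 expr1 mulr1 addr0 mulrC.
Qed.

Lemma meval_x2rev0 A t w : (x2rev A 0).@[pt2 t w] = A.@[pt3 1 t 1].
Proof.
rewrite meval_pt3 /x2rev raddf_sum; apply: eq_bigr => m _ /=.
by rewrite mevalZ mevalM !rmorphXn /= !mevalXU sub0n !expr1n expr0 !mulr1 mul1r.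
Qed.

Section Qhomog.
Variables (k : nat) (D : int) (A : {mpoly R[3]}).
Hypothesis qhA : qhomog k D A.

Lemma coef_x2coef_supp m : m \in msupp A -> (x2coef A (m v2))`_(m v1) = A@_m.
Proof.
move=> Am; rewrite coef_sum big_mkcond (bigD1_seq m) ?msupp_uniq //= eqxx.
rewrite coefZ coefXn eqxx mulr1 big1_seq ?addr0 // => m' /andP[m'm Am'].
case: eqP => // e2; rewrite coefZ coefXn; case: eqP => [e1|]; last by rewrite mulr0.
by case/eqP: m'm; apply: (qhomog_supp_eq12 qhA).
Qed.

Lemma x2coef_neq0 m : m \in msupp A -> x2coef A (m v2) != 0.
Proof.
move=> Am; apply/eqP => A0; move: (Am).
by rewrite mcoeff_msupp -coef_x2coef_supp // A0 coef0 eqxx.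
Qed.

Lemma x2coef0_neq0 : x2deg_le A 0 -> A != 0 -> x2coef A 0 != 0.
Proof.
move=> A0 /msupp_neq0[m Am]; move: (x2coef_neq0 Am).
by have := A0 _ Am; rewrite leqn0 => /eqP ->.
Qed.

End Qhomog.

End X2Slices.

Lemma meval_x2rev (F : fieldType) (A : {mpoly F[3]}) j t w :
  x2deg_le A j -> w != 0 -> (x2rev A j).@[pt2 t w] = w ^+ j * A.@[pt3 1 t w^-1].
Proof.
move=> Aj w0; rewrite meval_pt3 /x2rev raddf_sum mulr_sumr.
apply: eq_big_seq => m /Aj mj.
rewrite /= mevalZ mevalM !rmorphXn /= !mevalXU /pt2 /= expr1n mul1r.
rewrite -{2}(subnK mj) exprD exprVn; field; exact: expf_neq0.
Qed.

Lemma x2deg_le_of_fibreU1 (R : numDomainType) k D (A : {mpoly R[3]}) j (S : seq R) :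
  qhomog k D A -> (forall c, c \notin S -> (size (fibreU1 A c) <= j.+1)%N) ->
  x2deg_le A j.
Proof.
move=> qhA Asize m Am; rewrite leqNgt; apply/negP => jm.
have := x2coef_neq0 qhA Am; apply/negP/negPn/eqP.
apply: (poly_eq0_cofinite (S := S)) => c cS.
by rewrite -coef_fibreU1 nth_default // (leq_trans (Asize c cS)).
Qed.

Definition mnm2 (a b : nat) : 'X_{1..2} := (U_(u0) *+ a + U_(u1) *+ b)%MM.

Lemma mnm2E0 a b : mnm2 a b u0 = a.
Proof. by rewrite mnmDE !mulmnE !mnm1E /=; lia. Qed.

Lemma mnm2E1 a b : mnm2 a b u1 = b.
Proof. by rewrite mnmDE !mulmnE !mnm1E /=; lia. Qed.

Lemma mdeg_mnm2 a b : mdeg (mnm2 a b) = (a + b)%N.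
Proof. by rewrite mdegD !mdegMn !mdeg1 !mul1n. Qed.

Section Dehomogenisation.
Variable R : comNzRingType.
Implicit Types (p : {mpoly R[3]}).

Lemma mcoeff_dehom p mu :
  (dehom p)@_mu = \sum_(m <- msupp p) p@_m * (mnm2 (m v0) (m v1) == mu)%:R.
Proof.
rewrite /dehom comp_mpolyE raddf_sum; apply: eq_bigr => m _.
rewrite /= prod_ord3 mcoeffZ !(tnth_nth 0) /=.
by rewrite expr1n mulr1 !mpolyXn -mpolyXD mcoeffX.
Qed.

Lemma mcoeff_dehom_neq0 p mu : (dehom p)@_mu != 0 ->
  exists2 m, m \in msupp p & mnm2 (m v0) (m v1) = mu.
Proof.
rewrite mcoeff_dehom => /eqP nz.
have /hasP[m pm /eqP <-] :
    has (fun m : 'X_{1..3} => mnm2 (m v0) (m v1) == mu) (msupp p).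
  apply/negPn/negP => /hasPn nomu; apply: nz; rewrite big1_seq // => m.
  by move=> /andP[_ /nomu /negbTE ->]; rewrite mulr0.
by exists m.
Qed.

Lemma mcoeff_dehom_qhomog k D p m :
  (0 < k)%N -> qhomog k D p -> m \in msupp p -> (dehom p)@_(mnm2 (m v0) (m v1)) = p@_m.
Proof.
move=> k0 qhp pm; rewrite mcoeff_dehom (bigD1_seq m) ?msupp_uniq //= eqxx mulr1.
rewrite big1_seq ?addr0 // => m' /andP[m'm pm']; case: eqP; last by rewrite mulr0.
move=> e; case/eqP: m'm; apply: (qhomog_supp_eq01 qhp) => //.
  by rewrite -(mnm2E0 (m' v0) (m' v1)) e mnm2E0.
by rewrite -(mnm2E1 (m' v0) (m' v1)) e mnm2E1.
Qed.

End Dehomogenisation.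

Lemma mderiv_line (R : comNzRingType) (a b : R) l :
  (a *: 'X_v0 + b *: 'X_v1 : {mpoly R[3]})^`M(l) =
  (a * (v0 == l)%:R + b * (v1 == l)%:R)%:MP.
Proof.
have UU i : (U_(i) - U_(i))%MM = 0%MM :> 'X_{1..3}.
  by apply/mnmP => j; rewrite mnmBE subnn mnm0E.
rewrite mderivD !mderivZ !mderivX !mnm1E.
by case: (ord3P l) => ->; rewrite /= ?UU ?mpolyX0 ?scale0r ?alg_mpolyC;
  rewrite ?scaler0 ?mulr0 ?mulr1 ?addr0 ?add0r ?mpolyC0.
Qed.

Lemma invariant_line_of_factors (R : comNzRingType) (A0 A1 A2 : {mpoly R[3]})
    (a b : R) T2 TH :
  A2 = (a *: 'X_v0 + b *: 'X_v1) * T2 ->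
  b *: A0 - a *: A1 = (a *: 'X_v0 + b *: 'X_v1) * TH ->
  invariant_curve A0 A1 A2 (a *: 'X_v0 + b *: 'X_v1).
Proof.
move=> A2E A01E; rewrite /invariant_curve /= => i j.
rewrite !mderiv_line -!mul_mpolyC in A2E A01E *.
case: (ord3P i) => ->; case: (ord3P j) => -> /=;
  rewrite ?mulr0 ?mulr1 ?addr0 ?add0r ?mpolyC0.
- by exists 0; rewrite subrr mulr0.
- by exists TH; rewrite -A01E; ring.
- by exists (- (a%:MP * T2)); rewrite A2E; ring.
- by exists (- TH); rewrite mulrN -A01E; ring.
- by exists 0; rewrite subrr mulr0.
- by exists (- (b%:MP * T2)); rewrite A2E; ring.
- by exists (a%:MP * T2); rewrite A2E; ring.
- by exists (b%:MP * T2); rewrite A2E; ring.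
- by exists 0; rewrite subrr mulr0.
Qed.

Definition msubst n (R : nzRingType) (i : 'I_n) (q : {mpoly R[n]}) :
  n.-tuple {mpoly R[n]} :=
  [tuple if l == i then q else 'X_l | l < n].

Section Substitution.
Variables (R : comNzRingType) (n : nat) (i : 'I_n) (q : {mpoly R[n]}).

Lemma msubst_remainder (H : {mpoly R[n]}) :
  exists Th, H = H \mPo msubst i q + ('X_i - q) * Th.
Proof.
elim/mpolyind: H => [|c m p _ _ [Tp IH]].
  by exists 0; rewrite comp_mpoly0 mulr0 addr0.
set P := \prod_(l < n | l != i) ('X_l : {mpoly R[n]}) ^+ m l.
have Xm : 'X_[m] = 'X_i ^+ m i * P by rewrite mpolyXE_id (bigD1 i).
have Xms : 'X_[m] \mPo msubst i q = q ^+ m i * P.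
  rewrite comp_mpolyX (bigD1 i) //= tnth_mktuple eqxx; congr (_ * _).
  by apply: eq_bigr => l /negbTE li; rewrite tnth_mktuple li.
pose S := \sum_(e < m i) 'X_i ^+ ((m i).-1 - e) * q ^+ e.
have Xi : 'X_i ^+ m i = q ^+ m i + ('X_i - q) * S by rewrite /S -subrXX addrC subrK.
exists (c *: (S * P) + Tp).
by rewrite comp_mpolyD comp_mpolyZ Xms {1}IH Xm Xi -!mul_mpolyC; ring.
Qed.

Lemma msubst_eq0_factor (H : {mpoly R[n]}) :
  H \mPo msubst i q = 0 -> exists Th, H = ('X_i - q) * Th.
Proof. by move=> H0; have [Th] := msubst_remainder H; rewrite H0 add0r; exists Th. Qed.

End Substitution.

Lemma saturated_chart_zeros (F : fieldType) k (A0 A1 A2 : {mpoly F[3]}) :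
  saturated k A0 A1 A2 -> exists T : seq F, forall t v,
    A0.@[pt3 1 t v] = 0 -> A1.@[pt3 1 t v] = 0 -> A2.@[pt3 1 t v] = 0 -> t \in T.
Proof.
case=> S HS; exists [seq s.1.2 / s.1.1 | s <- S] => t v z0 z1 z2.
have [|s Ss [t' _ ts]] := HS (pt3 1 t v) _ z0 z1 z2.
  by exists v0; exact: oner_neq0.
move: (ts v0) (ts v1); rewrite /wact /pt3 /= => oneE tE.
have s11 : s.1.1 != 0 by apply: contra_eq_neq oneE => ->; rewrite mulr0 oner_neq0.
apply/mapP; exists s => //; apply: (mulIf s11).
by rewrite divfK // tE mulrAC -oneE mul1r.
Qed.

Section Foliation.
Variables (C : numClosedFieldType) (k d : nat) (A0 A1 A2 : {mpoly C[3]}).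
Hypothesis k_gt0 : (0 < k)%N.
Hypothesis qh0 : qhomog k (d%:Z - 1) A0.
Hypothesis qh1 : qhomog k (d%:Z - 1) A1.
Hypothesis qh2 : qhomog k (d%:Z - k%:Z) A2.
Hypothesis euler : 'X_v0 * A0 + 'X_v1 * A1 + k%:R *: ('X_v2 * A2) = 0.

Definition supp01 := msupp A0 ++ msupp A1.

Definition x2deg_one :=
  [/\ x2deg_le A0 1, x2deg_le A1 1 & exists2 m, m \in supp01 & m v2 = 1%N].

Lemma wdeg_supp01 m : m \in supp01 -> (m v0 + m v1 + k * m v2).+1 = d.
Proof. by rewrite mem_cat => /orP[/qh0 | /qh1]; rewrite /wdeg; lia. Qed.

Lemma eta_nzE s :
  eta_nz A0 A1 s.+1 <-> exists2 m, m \in supp01 & (m v0 + m v1)%N = s.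
Proof.
split=> [[mu [/= <- [] /mcoeff_dehom_neq0[m pm <-]]] | [m + <-]].
- by exists m; rewrite ?mem_cat ?pm // mdeg_mnm2.
- by exists m; rewrite ?mem_cat ?pm ?orbT // mdeg_mnm2.
rewrite mem_cat => /orP[pm|pm]; exists (mnm2 (m v0) (m v1)); rewrite mdeg_mnm2.
  by split=> //; left; rewrite (mcoeff_dehom_qhomog k_gt0 qh0 pm) -mcoeff_msupp.
by split=> //; right; rewrite (mcoeff_dehom_qhomog k_gt0 qh1 pm) -mcoeff_msupp.
Qed.

Lemma alg_mult_x2deg r : alg_mult A0 A1 r ->
  (forall m, m \in supp01 -> (r + k * m v2 <= d)%N) /\
  exists2 m, m \in supp01 & (r + k * m v2)%N = d.
Proof.
case=> r_gt0 etar rmin; split=> [m m01|].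
  have etam : eta_nz A0 A1 (m v0 + m v1).+1 by apply/eta_nzE; exists m.
  have := wdeg_supp01 m01; have : ~ (1 <= (m v0 + m v1).+1 < r)%N by move/rmin.
  lia.
case: r r_gt0 etar {rmin} => [//|r] _ /eta_nzE[m m01 mE].
by exists m => //; have := wdeg_supp01 m01; lia.
Qed.

Lemma alg_mult_x2deg_one r : alg_mult A0 A1 r -> (r + k)%N = d <-> x2deg_one.
Proof.
move=> /alg_mult_x2deg[rle [m0 m0S rE]]; split=> [rkd | [le0 le1 [m m01 m2]]].
  have x2le1 m : m \in supp01 -> (m v2 <= 1)%N by move/rle; nia.
  split=> [m pm | m pm | ]; first by apply: x2le1; rewrite mem_cat pm.
    by apply: x2le1; rewrite mem_cat pm orbT.
  by exists m0 => //; nia.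
have := rle m m01; have : (m0 v2 <= 1)%N by move: m0S; rewrite mem_cat => /orP[/le0|/le1].
rewrite m2; nia.
Qed.

Lemma mcoeff_euler n :
  ('X_v0 * A0)@_n + ('X_v1 * A1)@_n + k%:R * ('X_v2 * A2)@_n = 0.
Proof. by have := congr1 (mcoeff n) euler; rewrite !mcoeffD mcoeffZ mcoeff0. Qed.

Lemma euler_supp2 m : m \in msupp A2 -> exists2 m', m' \in supp01 & m' v2 = (m v2).+1.
Proof.
move=> A2m; pose n := (U_(v2) + m)%MM.
have n2 : n v2 = (m v2).+1 by rewrite mnmDE mnm1E.
have : ('X_v0 * A0)@_n + ('X_v1 * A1)@_n != 0.
  move/eqP: (mcoeff_euler n); rewrite addr_eq0 => /eqP ->.
  rewrite oppr_eq0 mulf_neq0 ?pnatr_eq0 -?lt0n //.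
  by rewrite -commr_mpolyX mcoeffMX -mcoeff_msupp.
have [c0|/mcoeff_XM_neq0_x2[m' pm' /= nm'] _] := eqVneq ('X_v0 * A0)@_n 0.
  rewrite c0 add0r => /mcoeff_XM_neq0_x2[m' pm' /= nm'].
  by exists m'; [rewrite mem_cat pm' orbT | lia].
by exists m'; [rewrite mem_cat pm' | lia].
Qed.

Lemma euler_supp0 m : m \in msupp A0 ->
  (exists2 m', m' \in msupp A1 & m' v2 = m v2) \/
  (exists2 m', m' \in msupp A2 & (m' v2).+1 = m v2).
Proof.
move=> A0m; pose n := (U_(v0) + m)%MM; have n2 : n v2 = m v2 by rewrite mnmDE mnm1E.
have : ('X_v1 * A1)@_n + k%:R * ('X_v2 * A2)@_n != 0.
  move/eqP: (mcoeff_euler n); rewrite -addrA addrC addr_eq0 => /eqP ->.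
  by rewrite oppr_eq0 -commr_mpolyX mcoeffMX -mcoeff_msupp.
have [c1|/mcoeff_XM_neq0_x2[m' pm' /= nm'] _] := eqVneq ('X_v1 * A1)@_n 0.
  rewrite c1 add0r mulf_eq0 negb_or => /andP[_ /mcoeff_XM_neq0_x2[m' pm' /= nm']].
  by right; exists m' => //; lia.
by left; exists m' => //; lia.
Qed.

Lemma euler_pt3 t v :
  A0.@[pt3 1 t v] + t * A1.@[pt3 1 t v] + k%:R * (v * A2.@[pt3 1 t v]) = 0.
Proof.
have := congr1 (meval (pt3 1 t v)) euler.
by rewrite !mevalD mevalZ !mevalM !mevalXU meval0 /= mul1r.
Qed.

Lemma x2deg_le_A2 : x2deg_le A0 1 -> x2deg_le A1 1 -> x2deg_le A2 0.
Proof.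
move=> le0 le1 m /euler_supp2[m' + m'E].
by rewrite mem_cat => /orP[/le0 | /le1]; rewrite m'E ltnS.
Qed.

Lemma x2deg_le_A0 : x2deg_le A1 1 -> x2deg_le A2 0 -> x2deg_le A0 1.
Proof. by move=> le1 le2 m /euler_supp0[[m' /le1 + <-] | [m' /le2 + <-]]. Qed.

Lemma A2_neq0 : saturated k A0 A1 A2 -> x2deg_one -> A2 != 0.
Proof.
move=> /saturated_chart_zeros[T zT] [le0 le1 [m m01 m2]]; apply/eqP => A2_0.
(* Otherwise the zero of A1(1, t, v), affine in v, is a zero of omega over every
   fibre t. *)
have [m' A1m' m'2] : exists2 m', m' \in msupp A1 & m' v2 = 1%N.
  move: m01; rewrite mem_cat => /orP[/euler_supp0[[m' A1m' m'E] | [m']] | A1m].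
  - by exists m'; rewrite ?m'E.
  - by rewrite A2_0 mcoeff_msupp mcoeff0 eqxx.
  - by exists m.
have a1 : x2coef A1 1 != 0 by rewrite -m'2 (x2coef_neq0 qh1).
have [t tT a1t] := poly_nonroot_notin T a1.
pose v := - (x2coef A1 0).[t] / (x2coef A1 1).[t].
have z1 : A1.@[pt3 1 t v] = 0 by rewrite meval_x2deg1 // /v divfK // subrr.
have z2 : A2.@[pt3 1 t v] = 0 by rewrite A2_0 meval0.
have z0 : A0.@[pt3 1 t v] = 0 by have := euler_pt3 t v; rewrite z1 z2 !mulr0 !addr0.
by case/negP: tT; apply: zT z0 z1 z2.
Qed.

Lemma riccati_x2deg_A2 Q : riccati A2 Q -> x2deg_le A2 0 /\ A2 != 0.
Proof.
case=> S tr; have nz c : c \notin S -> forall v, A2.@[pt3 1 c v] != 0 by move=> /tr[].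
split.
  apply: (x2deg_le_of_fibreU1 (S := S) qh2) => c /nz A2c.
  suff /eqP -> : size (fibreU1 A2 c) == 1%N by [].
  by apply: contraT => /closed_rootP[v]; rewrite /root horner_fibreU1 (negbTE (A2c v)).
have [c cS _] := poly_nonroot_notin S (oner_neq0 {poly C}).
by apply: contraTneq (nz c cS 0) => ->; rewrite meval0 eqxx.
Qed.

Lemma U3_form_exponent (mm : int) Q (S : seq C) : x2deg_le A2 0 -> A2 != 0 ->
  (forall t w, w != 0 -> Q.@[pt2 t w] = - (w ^ (mm - 2) * A2.@[pt3 1 t w^-1])) ->
  (forall c, c \notin S -> Q.@[pt2 c 0] != 0) -> mm = 2.
Proof.
move=> le2 nz2 QE Q0; have alpha := x2coef0_neq0 qh2 le2 nz2.
have [c cS ac] := poly_nonroot_notin S alpha.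
apply/eqP; rewrite -subr_eq0; apply/eqP.
apply: (expz_eq0_of_horner (q := fibreU3 Q c) (a := - (x2coef A2 0).[c])).
- by rewrite oppr_eq0.
- by rewrite horner_fibreU3 Q0.
- by move=> w w0; rewrite horner_fibreU3 QE // (meval_x2deg0 _ _ le2) mulrN.
Qed.

Lemma riccati_E_invariant_x2deg_one : G_riccati_and_E_invariant A1 A2 -> x2deg_one.
Proof.
case=> P [Q [[[mm PQE] _] ric [Th PE]]].
have [le2 nz2] := riccati_x2deg_A2 ric.
have mm2 : mm = 2.
  case: (ric) => S tr; apply: (U3_form_exponent (Q := Q) (S := S)) => //.
    by move=> t w w0; case: (PQE t w w0).
  by move=> c /tr[].
have le1 : x2deg_le A1 1.
  apply: (x2deg_le_of_fibreU1 (S := [::]) qh1) => c _.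
  apply: (size_le_of_horner_inv (q := fibreU3 Th c)) => w w0.
  rewrite horner_fibreU3 horner_fibreU1 expr1; apply: (mulfI w0).
  have [+ _] := PQE c w w0; rewrite PE mevalM mevalXU mm2 /= => ->.
  by rewrite mulrA -expr2.
split=> //; first exact: x2deg_le_A0.
have [m A2m] := msupp_neq0 nz2; have [m' m'01 m'2] := euler_supp2 A2m.
by exists m' => //; move: (le2 _ A2m); rewrite leqn0 m'2 => /eqP ->.
Qed.

Lemma x2deg_one_riccati_E_invariant :
  saturated k A0 A1 A2 -> x2deg_one -> G_riccati_and_E_invariant A1 A2.
Proof.
move=> sat sh; have nz2 := A2_neq0 sat sh; case: sh => le0 le1 _.
have le2 := x2deg_le_A2 le0 le1; have alpha := x2coef0_neq0 qh2 le2 nz2.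
have QE t w : (- x2rev A2 0).@[pt2 t w] = - (x2coef A2 0).[t].
  by rewrite mevalN meval_x2rev0 (meval_x2deg0 _ _ le2).
exists ('X_u1 * x2rev A1 1), (- x2rev A2 0); split.
- split.
    exists 2 => t w w0; rewrite mevalM mevalXU meval_x2rev // QE.
    by rewrite (meval_x2deg0 _ _ le2) expr1 mulrA -expr2 subrr expr0z mul1r.
  case=> R [S [_ QS]]; have [t _ at0] := poly_nonroot_notin [::] alpha.
  move: (QE t 0); rewrite QS mevalM mevalXU /= mul0r => /esym/eqP.
  by rewrite oppr_eq0 (negbTE at0).
- have [S aS] := poly_nonroot_cofinite alpha.
  exists S => c cS; split; first by move=> v; rewrite (meval_x2deg0 _ _ le2) aS.
  by rewrite QE oppr_eq0 aS.
- by exists (x2rev A1 1).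
Qed.

Lemma euler_subst (sg : 3.-tuple {mpoly C[3]}) : A2 \mPo sg = 0 ->
  tnth sg v0 * (A0 \mPo sg) + tnth sg v1 * (A1 \mPo sg) = 0.
Proof.
move=> A2s; have := congr1 (comp_mpoly sg) euler.
rewrite !raddfD /= comp_mpolyZ !rmorphM /= !comp_mpolyXU A2s mulr0 scaler0 addr0.
by rewrite comp_mpoly0 -!tnth_nth.
Qed.

Lemma invariant_line_x0 : A2 \mPo msubst v0 0 = 0 -> has_invariant_line A0 A1 A2.
Proof.
move=> A2s; have := euler_subst A2s; rewrite !tnth_mktuple /= mul0r add0r => /eqP.
rewrite mulf_eq0 (negbTE (mpolyXU_neq0 _ _)) => /eqP/msubst_eq0_factor[T1 A1E].
have [T2 A2E] := msubst_eq0_factor A2s.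
exists 1, 0; split; first by left; exact: oner_neq0.
apply: (invariant_line_of_factors (T2 := T2) (TH := - T1)).
  by rewrite scale1r scale0r addr0 A2E subr0.
by rewrite !scale1r !scale0r sub0r addr0 A1E subr0 mulrN.
Qed.

Lemma invariant_line_x1 (tau : C) :
  A2 \mPo msubst v1 (tau *: 'X_v0) = 0 -> has_invariant_line A0 A1 A2.
Proof.
set sg := msubst v1 (tau *: 'X_v0) => A2s.
have : 'X_v0 * ((A0 + tau *: A1) \mPo sg) = 0.
  rewrite -(euler_subst A2s) !tnth_mktuple /= comp_mpolyD comp_mpolyZ -!mul_mpolyC; ring.
move/eqP; rewrite mulf_eq0 (negbTE (mpolyXU_neq0 _ _)).
move=> /eqP/msubst_eq0_factor[TH A01E]; have [T2 A2E] := msubst_eq0_factor A2s.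
exists (- tau), 1; split; first by right; exact: oner_neq0.
have lineE : 'X_v1 - tau *: 'X_v0 = - tau *: 'X_v0 + 1 *: 'X_v1 :> {mpoly C[3]}.
  by rewrite scale1r scaleNr addrC.
apply: (invariant_line_of_factors (T2 := T2) (TH := TH)); first by rewrite -lineE.
by rewrite -lineE scale1r scaleNr opprK.
Qed.

Lemma x2deg0_invariant_line : (k < d)%N -> x2deg_le A2 0 -> has_invariant_line A0 A1 A2.
Proof.
move=> kd le2; have W2 m : m \in msupp A2 -> (m v0 + m v1 + k)%N = d /\ m v2 = 0%N.
  by move=> A2m; have := qh2 A2m; have := le2 _ A2m; rewrite /wdeg; lia.
(* The binary form A2 either has a root (1 : tau), giving the line x1 = tau x0,
   or is c x0^(d - k), giving the line x0 = 0. *)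
have [/closed_rootP[tau /eqP alpha_tau] | /negPn/eqP sz] :=
  boolP (size (x2coef A2 0) != 1%N).
  apply: (invariant_line_x1 (tau := tau)).
  suff -> : A2 \mPo msubst v1 (tau *: 'X_v0) = (x2coef A2 0).[tau] *: 'X_v0 ^+ (d - k).
    by rewrite alpha_tau scale0r.
  rewrite comp_mpolyE horner_x2coef scaler_suml big_seq_cond [RHS]big_seq_cond.
  apply: eq_big => [m | m /andP[A2m _]].
    by case A2m: (m \in msupp A2) => //=; rewrite -leqn0 le2.
  have [Wm m2] := W2 m A2m; have -> : (d - k = m v0 + m v1)%N by lia.
  rewrite prod_ord3 !tnth_mktuple /= m2 expr0 mulr1 exprZn -scalerAr -exprD scalerA.
  by rewrite mulrC.
apply: invariant_line_x0; rewrite comp_mpolyE big1_seq // => m /andP[_ A2m].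
have [Wm m2] := W2 m A2m.
have m1 : m v1 = 0%N.
  apply/eqP; apply: contraTT (A2m) => m1; rewrite mcoeff_msupp negbK.
  by rewrite -(coef_x2coef_supp qh2 A2m) m2 nth_default // sz lt0n.
rewrite prod_ord3 !tnth_mktuple /= expr0n (_ : (m v0 == 0%N) = false).
  by rewrite !mul0r scaler0.
apply/eqP; lia.
Qed.

End Foliation.

Unset Implicit Arguments.

Theorem corollary3p4 (C : numClosedFieldType) (k d r : nat)
  (A0 A1 A2 : {mpoly C[3]}) :
  (2 <= k)%N ->
  is_foliation k d A0 A1 A2 ->
  saturated k A0 A1 A2 ->
  alg_mult A0 A1 r ->
  (G_riccati_and_E_invariant A1 A2 <-> r%:Z = d%:Z - k%:Z) /\
  (r%:Z = d%:Z - k%:Z -> has_invariant_line A0 A1 A2).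
Proof.
move=> k2 [qh0 qh1 qh2 euler _] sat am.
have k_gt0 : (0 < k)%N by apply: leq_trans k2.
have rkd : r%:Z = d%:Z - k%:Z <-> (r + k)%N = d by split; lia.
have shape := alg_mult_x2deg_one k_gt0 qh0 qh1 am.
have ric_shape := riccati_E_invariant_x2deg_one k_gt0 qh1 qh2 euler.
have shape_ric := x2deg_one_riccati_E_invariant k_gt0 qh1 qh2 euler sat.
split; first by split=> [/ric_shape/shape.2/rkd.2 | /rkd.1/shape.1/shape_ric].
move=> /rkd.1 rk; have [le0 le1 _] := shape.1 rk.
apply: (x2deg0_invariant_line k_gt0 qh2 euler).
  by case: am => r_gt0 _ _; lia.
exact: x2deg_le_A2 k_gt0 euler le0 le1.
Qed.
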